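(* Let $G$ be a group with weak paradoxical towers. Then $G$ is not amenable.
   Context: For $n\in\mathbb N$, a group $G$ has weak $n$-paradoxical towers if for every $m\in\mathbb N$ there exist a finite subset $D\subseteq G$ with $|D|\ge m$, subsets $K_1,\dots,K_n\subseteq G$ and elements $g_1,\dots,g_n\in G$ such that for each $j$ the sets $\{dK_j\}_{d\in D}$ are pairwise disjoint, and $\bigcup_{j=1}^n g_jK_j=G$. $G$ has weak paradoxical towers if it has weak $n$-paradoxical towers for some $n$. *)

(* abstract (possibly infinite, discrete) groups as explicit records,
   amenability via a finitely additive left-invariant probability measure on all subsets. *)
From Stdlib Require Import Reals List Arith.
Open Scope R_scope.

Record Group := {
  carrier :> Type;
  gmul : carrier -> carrier -> carrier;
  gone : carrier;
  ginv : carrier -> carrier;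
  gmulA : forall x y z, gmul x (gmul y z) = gmul (gmul x y) z;
  gmul1 : forall x, gmul gone x = x;
  gmulV : forall x, gmul (ginv x) x = gone
}.

Definition ltrans (G : Group) (g : G) (A : G -> Prop) : G -> Prop :=
  fun x => exists a, A a /\ x = gmul G g a.

Definition weak_n_paradoxical_towers (G : Group) (n : nat) : Prop :=
  forall m : nat, exists (D : list G) (K : nat -> G -> Prop) (g : nat -> G),
    NoDup D /\ (m <= length D)%nat /\
    (forall j, (j < n)%nat -> forall d d', In d D -> In d' D -> d <> d' ->
        forall x, ~ (ltrans G d (K j) x /\ ltrans G d' (K j) x)) /\
    (forall x : G, exists j, (j < n)%nat /\ ltrans G (g j) (K j) x).

Definition weak_paradoxical_towers (G : Group) : Prop :=
  exists n : nat, weak_n_paradoxical_towers G n.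

Definition amenable (G : Group) : Prop :=
  exists mu : (G -> Prop) -> R,
    (forall A, 0 <= mu A) /\
    mu (fun _ => True) = 1 /\
    (forall A B : G -> Prop, (forall x, ~ (A x /\ B x)) ->
        mu (fun x => A x \/ B x) = mu A + mu B) /\
    (forall (g : G) (A : G -> Prop), mu (ltrans G g A) = mu A).

(* An invariant mean gives each base K_j measure at most 1/|D|, because its
   |D| translates d K_j are pairwise disjoint.  The n translates g_j K_j cover
   G, so 1 <= n/|D|, which fails once |D| > n. *)
From Stdlib Require Import Reals List Arith.
From Stdlib Require Import Lra Lia Classical FunctionalExtensionality PropExtensionality.

Section FinitelyAdditiveMeasure.
Variable T : Type.
Variable mu : (T -> Prop) -> R.
Hypothesis mu_ge0 : forall A, 0 <= mu A.
Hypothesis mu_additive : forall A B : T -> Prop, (forall x, ~ (A x /\ B x)) ->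
  mu (fun x => A x \/ B x) = mu A + mu B.

Lemma measure_ext (A B : T -> Prop) : (forall x, A x <-> B x) -> mu A = mu B.
Proof.
  intro AB. f_equal. apply functional_extensionality. intro x.
  apply propositional_extensionality, AB.
Qed.

Lemma measure_empty : mu (fun _ => False) = 0.
Proof.
  assert (E := mu_additive (fun _ => False) (fun _ => False) ltac:(tauto)).
  rewrite (measure_ext _ (fun _ => False)) in E by tauto.
  lra.
Qed.

Lemma measure_mono (A B : T -> Prop) : (forall x, A x -> B x) -> mu A <= mu B.
Proof.
  intro AB.
  rewrite (measure_ext B (fun x => A x \/ (B x /\ ~ A x))).
  - rewrite mu_additive by tauto.
    specialize (mu_ge0 (fun x => B x /\ ~ A x)). lra.
  - intro x. destruct (classic (A x)); firstorder.
Qed.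

Lemma measure_union_le (A B : T -> Prop) :
  mu (fun x => A x \/ B x) <= mu A + mu B.
Proof.
  rewrite (measure_ext _ (fun x => A x \/ (B x /\ ~ A x))).
  - rewrite mu_additive by tauto.
    assert (mu (fun x => B x /\ ~ A x) <= mu B) by (apply measure_mono; tauto).
    lra.
  - intro x. destruct (classic (A x)); tauto.
Qed.

Lemma measure_bigcup_le (P : nat -> T -> Prop) (n : nat) (c : R) :
  (forall j, (j < n)%nat -> mu (P j) <= c) ->
  mu (fun x => exists j, (j < n)%nat /\ P j x) <= INR n * c.
Proof.
  induction n as [|n IH]; intro Pc.
  - rewrite Rmult_0_l, <- measure_empty.
    apply measure_mono. intros x [j [Hj _]]. lia.
  - rewrite S_INR.
    apply Rle_trans with
      (mu (fun x => (exists j, (j < n)%nat /\ P j x) \/ P n x)).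
    + apply measure_mono. intros x [j [Hj Pjx]].
      destruct (Nat.eq_dec j n) as [->|Hjn]; [now right | left].
      exists j. split; [lia | assumption].
    + eapply Rle_trans; [apply measure_union_le|].
      assert (mu (P n) <= c) by (apply Pc; lia).
      assert (IHc := IH ltac:(intros j Hj; apply Pc; lia)).
      lra.
Qed.

Lemma measure_disjoint_bigcup {I : Type} (P : I -> T -> Prop) (D : list I) (c : R) :
  NoDup D ->
  (forall d d', In d D -> In d' D -> d <> d' -> forall x, ~ (P d x /\ P d' x)) ->
  (forall d, In d D -> mu (P d) = c) ->
  mu (fun x => exists d, In d D /\ P d x) = INR (length D) * c.
Proof.
  induction D as [|a D IH]; intros HD Pdisj Pc.
  - rewrite Rmult_0_l, <- measure_empty.
    apply measure_ext. intro x. split; [intros [d [[] _]] | tauto].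
  - inversion HD as [|? ? aD HD']; subst.
    rewrite (measure_ext _ (fun x => P a x \/ exists d, In d D /\ P d x)).
    + rewrite mu_additive, IH, Pc; cbn [length]; [rewrite S_INR; lra | ..].
      * now left.
      * assumption.
      * intros d d' Hd Hd'. apply Pdisj; now right.
      * intros d Hd. apply Pc. now right.
      * intros x [Pax [d [Hd Pdx]]]. apply (Pdisj a d) with x; simpl; auto.
        intros <-. contradiction.
    + intro x. simpl. firstorder (subst; auto).
Qed.

End FinitelyAdditiveMeasure.

Section InvariantMean.
Variable G : Group.
Variable mu : (G -> Prop) -> R.
Hypothesis mu_ge0 : forall A, 0 <= mu A.
Hypothesis mu_total : mu (fun _ => True) = 1.
Hypothesis mu_additive : forall A B : G -> Prop, (forall x, ~ (A x /\ B x)) ->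
  mu (fun x => A x \/ B x) = mu A + mu B.
Hypothesis mu_invariant : forall (g : G) (A : G -> Prop), mu (ltrans G g A) = mu A.

Lemma invariant_mean_tower_le (D : list G) (K : G -> Prop) :
  NoDup D ->
  (forall d d', In d D -> In d' D -> d <> d' ->
     forall x, ~ (ltrans G d K x /\ ltrans G d' K x)) ->
  INR (length D) * mu K <= 1.
Proof.
  intros HD Kdisj.
  rewrite <- (measure_disjoint_bigcup _ mu mu_additive (fun d => ltrans G d K))
    by auto.
  rewrite <- mu_total. now apply measure_mono.
Qed.

Lemma invariant_mean_cover_ge (n : nat) (K : nat -> G -> Prop) (g : nat -> G) (c : R) :
  (forall x, exists j, (j < n)%nat /\ ltrans G (g j) (K j) x) ->
  (forall j, (j < n)%nat -> mu (K j) <= c) ->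
  1 <= INR n * c.
Proof.
  intros Kcover Kc.
  rewrite <- mu_total.
  eapply Rle_trans;
    [|apply (measure_bigcup_le _ mu mu_ge0 mu_additive (fun j => ltrans G (g j) (K j)))].
  - apply measure_mono; auto.
  - intros j Hj. rewrite mu_invariant. now apply Kc.
Qed.

End InvariantMean.

Theorem lemma3p11 (G : Group) : weak_paradoxical_towers G -> ~ amenable G.
Proof.
  intros [n towers] [mu [mu_ge0 [mu_total [mu_additive mu_invariant]]]].
  destruct (towers (S n)) as [D [K [g [HD [Dlen [Kdisj Kcover]]]]]].
  apply le_INR in Dlen. rewrite S_INR in Dlen.
  assert (n_ge0 := pos_INR n).
  assert (Kle : forall j, (j < n)%nat -> mu (K j) <= / INR (length D)).
  { intros j Hj.
    assert (Kj := invariant_mean_tower_le G mu mu_ge0 mu_total mu_additive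
                    mu_invariant D (K j) HD (Kdisj j Hj)).
    apply Rmult_le_reg_l with (INR (length D)); [lra|].
    rewrite Rinv_r; lra. }
  assert (Hn := invariant_mean_cover_ge G mu mu_ge0 mu_total mu_additive
                  mu_invariant n K g _ Kcover Kle).
  apply (Rmult_le_compat_l (INR (length D))) in Hn; [|lra].
  rewrite Rmult_1_r, Rmult_comm, Rmult_assoc, Rinv_l in Hn; lra.
Qed.
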